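(* For every integer $d\ge1$, $$\rho(0,d)=\frac{1}{d\,\varphi(d)},\qquad \rho(d,2d)=\begin{cases}\rho(0,2d)&\text{if $d$ is odd},\\ 3\rho(0,2d)&\text{if $d$ is even}.\end{cases}$$
   Context: $\varphi$ is Euler's totient. For integers $a$ and $d\ge1$, $\rho(a,d)=A\sum_{t\ge1,\ t\equiv a\pmod d}r(t)$, where $A=\prod_p\bigl(1-\frac{1}{p(p-1)}\bigr)$ (product over primes) and $r(t)=\frac{1}{t^2}\prod_{p\mid t}\frac{p^2-1}{p^2-p-1}$; equivalently $\rho(a,d)$ is the average over primes $p$ of the proportion of elements of $\mathbb F_p^*$ whose index $[\mathbb F_p^*:\langle x\rangle]$ is $\equiv a\pmod d$. *)

From Stdlib Require Import Reals ZArith List.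
From Coquelicot Require Import Coquelicot.
From mathcomp Require ssrnat prime.
Open Scope R_scope.

Definition rfac (p : nat) : R :=
  (INR p ^ 2 - 1) / (INR p ^ 2 - INR p - 1).

Definition r (t : nat) : R :=
  / (INR t ^ 2) * fold_right (fun p acc => rfac p * acc) 1 (prime.primes t).

Definition A_partial (n : nat) : R :=
  fold_right (fun p acc => (1 - / (INR p * (INR p - 1))) * acc) 1
    (filter (fun p => prime.prime p) (seq 0 n)).

Definition ArtinA : R := real (Lim_seq A_partial).

Definition congr (t : nat) (a : Z) (d : nat) : bool :=
  Z.eqb (Z.modulo (Z.of_nat t - a) (Z.of_nat d)) 0.

Definition rho_term (a : Z) (d : nat) (t : nat) : R :=
  if (Nat.leb 1 t && congr t a d)%bool then r t else 0.

Definition rho (a : Z) (d : nat) : R := ArtinA * Series (rho_term a d).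

Definition phi (n : nat) : nat := prime.totient n.

From Stdlib Require Import Reals ZArith List Lia Lra FinFun Permutation.
From Coquelicot Require Import Coquelicot.
From mathcomp Require ssreflect ssrfun ssrbool eqtype ssrnat seq div prime zify.

(* The weight r is multiplicative away from each prime: r (p^k u) = r (p^k) r u
   when p does not divide u.  Hence the sum of r over the multiples of d is the
   Euler product over all primes p of the local sums L_p = sum_{k >= v_p(d)} r (p^k),
   and a geometric-series computation gives
   (1 - 1/(p(p-1))) L_p = 1/(p^e phi(p^e)) with e = v_p(d).  Multiplying by the
   Artin product therefore yields rho(0,d) = 1/(d phi(d)).  The Euler product is
   justified by squeezing: a partial sum up to N is at most the product over the
   primes below N+1 of the full local sums, while a product of truncated local
   sums is a finite subsum of the series.  Finally t = d (mod 2d) iff d | t and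
   2d does not divide t, so rho(d,2d) = rho(0,d) - rho(0,2d), and
   phi(2d) is phi(d) or 2 phi(d) according to the parity of d. *)

Module ArtinDensity.
Import ssreflect ssrfun ssrbool eqtype ssrnat seq div prime zify.
Open Scope R_scope.

Definition lsum {A} (f : A -> R) (l : list A) : R :=
  fold_right (fun x acc => f x + acc) 0 l.

Definition lprod {A} (f : A -> R) (l : list A) : R :=
  fold_right (fun x acc => f x * acc) 1 l.

Lemma lsum_app {A} (f : A -> R) l1 l2 :
  lsum f (l1 ++ l2)%list = lsum f l1 + lsum f l2.
Proof. elim: l1 => [|x l IH] /=; rewrite /lsum /=; [lra|]. rewrite -/(lsum f _) IH /lsum; lra. Qed.

Lemma lsum_ext {A} (f g : A -> R) l :
  (forall x, In x l -> f x = g x) -> lsum f l = lsum g l.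
Proof.
elim: l => [|x l IH] H //=. rewrite /lsum /= -!/(lsum _ _) H; [|by left].
by rewrite IH // => y Hy; apply H; right.
Qed.

Lemma lsum_map {A B} (f : B -> R) (g : A -> B) l :
  lsum f (List.map g l) = lsum (fun x => f (g x)) l.
Proof. elim: l => [|x l IH] //=. rewrite /lsum /= -!/(lsum _ _) IH //. Qed.

Lemma lsum_flat_map {A B} (f : B -> R) (F : A -> list B) l :
  lsum f (flat_map F l) = lsum (fun x => lsum f (F x)) l.
Proof.
elim: l => [|x l IH] //.
have -> : flat_map F (x :: l) = (F x ++ flat_map F l)%list by [].
by rewrite lsum_app IH.
Qed.

Lemma lsum_mull {A} (f : A -> R) c l : lsum (fun x => c * f x) l = c * lsum f l.
Proof. elim: l => [|x l IH] /=; rewrite /lsum /=; [lra|]. rewrite -!/(lsum _ _) IH; lra. Qed.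

Lemma lsum_nonneg {A} (f : A -> R) l : (forall x, 0 <= f x) -> 0 <= lsum f l.
Proof.
move=> H; elim: l => [|x l IH] /=; rewrite /lsum /=; [lra|].
rewrite -!/(lsum _ _); have := H x; lra.
Qed.

Lemma lsum_le_support (f : nat -> R) (l1 l2 : list nat) :
  (forall x, 0 <= f x) -> NoDup l1 ->
  (forall x, In x l1 -> f x <> 0 -> In x l2) -> lsum f l1 <= lsum f l2.
Proof.
move=> Hf Hnd; elim: l1 l2 Hnd => [|x l IH] l2 Hnd Hin.
  exact: lsum_nonneg.
inversion Hnd as [|? ? Hx Hl]; subst.
change (lsum f (x :: l)) with (f x + lsum f l).
case: (Req_dec (f x) 0) => Hfx.
  rewrite Hfx Rplus_0_l; apply: IH => // y Hy Hfy; apply: Hin => //; by right.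
have [a [b Hl2]] := in_split x l2 (Hin x (or_introl erefl) Hfx); subst l2.
have : lsum f l <= lsum f (a ++ b).
  apply: IH => // y Hy Hfy.
  have := Hin y (or_intror Hy) Hfy; rewrite !in_app_iff /= => -[H1|[H1|H1]]; auto.
  by subst y.
rewrite !lsum_app; change (lsum f (x :: b)) with (f x + lsum f b); lra.
Qed.

Lemma lprod_app {A} (f : A -> R) l1 l2 :
  lprod f (l1 ++ l2)%list = lprod f l1 * lprod f l2.
Proof. elim: l1 => [|x l IH] /=; rewrite /lprod /=; [lra|]. rewrite -/(lprod f _) IH /lprod; lra. Qed.

Lemma lprod_ext {A} (f g : A -> R) l :
  (forall x, In x l -> f x = g x) -> lprod f l = lprod g l.
Proof.
elim: l => [|x l IH] H //=. rewrite /lprod /= -!/(lprod _ _) H; [|by left].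
by rewrite IH // => y Hy; apply H; right.
Qed.

Lemma lprod_mul {A} (f g : A -> R) l :
  lprod (fun x => f x * g x) l = lprod f l * lprod g l.
Proof. elim: l => [|x l IH] /=; rewrite /lprod /=; [lra|]. rewrite -!/(lprod _ _) IH; lra. Qed.

Lemma lprod_perm {A} (f : A -> R) l1 l2 : Permutation l1 l2 -> lprod f l1 = lprod f l2.
Proof.
elim => [|x l l' _ IH|x y l|l l' l'' _ IH1 _ IH2] //=; rewrite /lprod /= -!/(lprod _ _).
- by rewrite IH.
- lra.
- by rewrite IH1 IH2.
Qed.

Lemma lprod_nonneg {A} (f : A -> R) l : (forall x, In x l -> 0 <= f x) -> 0 <= lprod f l.
Proof.
elim: l => [|x l IH] H; rewrite /lprod /=; first lra.
rewrite -/(lprod _ _); apply: Rmult_le_pos; first by apply: H; left.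
by apply: IH => y Hy; apply: H; right.
Qed.

Lemma lprod_le {A} (f g : A -> R) l :
  (forall x, In x l -> 0 <= f x <= g x) -> lprod f l <= lprod g l.
Proof.
elim: l => [|x l IH] H; rewrite /lprod /=; [lra|]. rewrite -!/(lprod _ _).
have [fx0 fxg] := H x (or_introl erefl).
have Hl : forall y, In y l -> 0 <= f y <= g y by move=> y Hy; apply H; right.
apply: Rmult_le_compat => //; last exact: IH.
by apply: lprod_nonneg => y /Hl [].
Qed.

Lemma is_lim_seq_lprod {A} (F : nat -> A -> R) (G : A -> R) l :
  (forall x, In x l -> is_lim_seq (fun K => F K x) (G x)) ->
  is_lim_seq (fun K => lprod (F K) l) (lprod G l).
Proof.
elim: l => [|x l IH] H; rewrite /lprod /=; first exact: is_lim_seq_const.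
rewrite -/(lprod G l); apply: (is_lim_seq_ext (fun K => F K x * lprod (F K) l)) => //.
apply: is_lim_seq_mult'; first by apply H; left.
by apply IH => y Hy; apply H; right.
Qed.

Lemma In_mem (x : nat) (s : seq nat) : In x s <-> x \in s.
Proof.
elim: s => [|y s IH]; first by split.
rewrite in_cons; split.
  move=> [->|H]; first by rewrite eqxx.
  by apply/orP; right; apply/IH.
case/orP => [/eqP ->|H]; first by left.
by right; apply/IH.
Qed.

Lemma uniq_NoDup (s : seq nat) : uniq s -> NoDup s.
Proof.
elim: s => [|y s IH] /=; first by constructor.
case/andP => H1 H2; constructor; last by auto.
by rewrite In_mem; apply/negP.
Qed.

Lemma NoDup_flat_map {A B} (F : A -> list B) (l : list A) :
  NoDup l -> (forall k, In k l -> NoDup (F k)) ->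
  (forall k k' x, In k l -> In k' l -> In x (F k) -> In x (F k') -> k = k') ->
  NoDup (flat_map F l).
Proof.
elim: l => [|a l IH] Hl HF Hd /=; first by constructor.
inversion Hl as [|? ? Ha Hl']; subst.
apply: NoDup_app.
- by apply: HF; left.
- apply: IH => //; first by move=> k Hk; apply: HF; right.
  by move=> k k' x Hk Hk'; apply: Hd; right.
- move=> x Hx /in_flat_map [k [Hk Hxk]].
  have Hak : a = k by apply: (Hd a k x); [left|right|..].
  by subst k.
Qed.

Lemma pfactor_decomp {p m} : prime p -> (0 < m)%N ->
  exists u, [/\ (0 < u)%N, ~~ (p %| u) & m = (p ^ logn p m * u)%N].
Proof.
move=> pp m0; have [u Hc Hm] := pfactor_coprime pp m0.
exists u; split.
- by move: m0; rewrite Hm muln_gt0 => /andP[].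
- by rewrite -prime_coprime.
- by rewrite mulnC {1}Hm.
Qed.

Lemma logn_pfactorM {p} k {u} : prime p -> ~~ (p %| u) -> (0 < u)%N ->
  logn p (p ^ k * u) = k.
Proof.
move=> pp pu u0; rewrite lognM ?expn_gt0 ?(prime_gt0 pp) // (pfactorK k pp).
by rewrite logn_coprime ?addn0 ?prime_coprime.
Qed.

Lemma logn_pfactorM_other {q p} k {u} : prime p -> q <> p -> (0 < u)%N ->
  logn q (p ^ k * u) = logn q u.
Proof.
move=> pp qp u0; rewrite lognM ?expn_gt0 ?(prime_gt0 pp) // lognX logn_prime //.
have -> : (q == p) = false by apply/eqP.
by rewrite muln0.
Qed.

Lemma prime_dvd_pfactorM {q p k u} : prime q -> prime p -> q <> p ->
  q %| p ^ k * u -> q %| u.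
Proof.
move=> pq pp qp; rewrite Euclid_dvdM // Euclid_dvdX // dvdn_prime2 //.
by have -> : (q == p) = false by apply/eqP.
Qed.

Lemma no_prime_divisor_eq1 {m} : (0 < m)%N ->
  (forall q, prime q -> q %| m -> False) -> m = 1%N.
Proof.
move=> m0 H; case: (ltngtP m 1) => [|m1|//]; first lia.
by case: (H (pdiv m)); [apply: pdiv_prime|apply: pdiv_dvd].
Qed.

Lemma dvdn_from_logn d t : (0 < d)%N -> (0 < t)%N ->
  (forall q, prime q -> logn q d <= logn q t)%N -> d %| t.
Proof.
move=> d0 t0 Hlog; apply/dvdn_partP => // q; rewrite mem_primes => /andP[pq _].
by rewrite p_part pfactor_dvdn //; apply: Hlog.
Qed.

Definition allprime (ps : list nat) := forall q, In q ps -> prime q.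

Lemma allprime_tail {p ps} : allprime (p :: ps) -> allprime ps.
Proof. by move=> H q Hq; apply: H; right. Qed.

Lemma prime_divisors_cofactor {p ps k t u} : t = (p ^ k * u)%N -> ~~ (p %| u) ->
  (forall q, prime q -> q %| t -> In q (p :: ps)) ->
  forall q, prime q -> q %| u -> In q ps.
Proof.
move=> Ht pu Hq q pq qu; have : In q (p :: ps) by apply: Hq => //; rewrite Ht dvdn_mull.
by case=> // Hqp; subst q; rewrite qu in pu.
Qed.

Lemma INR_expn p k : INR (p ^ k) = INR p ^ k.
Proof. elim: k => [|k IH]; first by rewrite expn0. by rewrite expnS mult_INR IH. Qed.

Lemma prime_INR_ge2 {p} : prime p -> 2 <= INR p.
Proof. move=> /prime_gt1 /ltP H; apply: (le_INR 2); lia. Qed.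

Definition inv_sq (p : nat) : R := / (INR p ^ 2).

Lemma inv_sq_bounds {p} : prime p -> 0 < inv_sq p < 1.
Proof.
move=> /prime_INR_ge2 H2; rewrite /inv_sq; split.
  apply: Rinv_0_lt_compat; nra.
rewrite -Rinv_1; apply: Rinv_lt_contravar; nra.
Qed.

Lemma rfac_nonneg p : prime p -> 0 <= rfac p.
Proof. move=> /prime_INR_ge2 H2; apply: Rle_mult_inv_pos; nra. Qed.

Lemma rE t : r t = / (INR t ^ 2) * lprod rfac (primes t).
Proof. by []. Qed.

Lemma r1 : r 1 = 1.
Proof. rewrite rE /=; field. Qed.

Lemma r_nonneg t : (0 < t)%N -> 0 <= r t.
Proof.
move=> /ltP t0; rewrite rE; apply: Rmult_le_pos.
  by apply/Rlt_le/Rinv_0_lt_compat/pow_lt/lt_0_INR.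
by apply: lprod_nonneg => q /In_mem; rewrite mem_primes => /andP[/rfac_nonneg].
Qed.

Lemma r_pfactorM p k u : prime p -> (0 < u)%N -> ~~ (p %| u) ->
  r (p ^ k.+1 * u) = rfac p * inv_sq p ^ k.+1 * r u.
Proof.
move=> pp u0 pu.
have Hperm : Permutation (primes (p ^ k.+1 * u)) (p :: primes u).
  apply: NoDup_Permutation; first exact/uniq_NoDup/primes_uniq.
    apply/uniq_NoDup => /=; rewrite primes_uniq andbT mem_primes negb_and.
    by rewrite negb_and pu !orbT.
  move=> x; rewrite !In_mem primesM ?expn_gt0 ?(prime_gt0 pp) //.
  by rewrite primesX // primes_prime // !in_cons in_nil orbF.
rewrite !rE (lprod_perm _ _ _ Hperm) mult_INR INR_expn.
change (lprod rfac (p :: primes u)) with (rfac p * lprod rfac (primes u)).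
have Hu : 0 < INR u by apply/lt_0_INR/ltP.
have Hpk : 0 < INR p ^ k.+1 by apply: pow_lt; have := prime_INR_ge2 pp; lra.
rewrite /inv_sq pow_inv -pow_mult Nat.mul_comm pow_mult.
by field; split; apply: Rgt_not_eq.
Qed.

Lemma r_pfactor p k : prime p -> r (p ^ k.+1) = rfac p * inv_sq p ^ k.+1.
Proof.
move=> pp; have := @r_pfactorM p k 1 pp isT.
rewrite muln1 r1 Rmult_1_r; apply.
by rewrite dvdn1 neq_ltn prime_gt1 ?orbT.
Qed.

Lemma r_mul p k u : prime p -> (0 < u)%N -> ~~ (p %| u) ->
  r (p ^ k * u) = r (p ^ k) * r u.
Proof.
move=> pp u0 pu; case: k => [|k]; first by rewrite expn0 mul1n r1 Rmult_1_l.
by rewrite r_pfactorM // r_pfactor.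
Qed.

(* The sum of r (p ^ k) over all k >= e. *)
Definition local_sum (p e : nat) : R :=
  match e with
  | 0 => 1 + rfac p * inv_sq p / (1 - inv_sq p)
  | _ => rfac p * inv_sq p ^ e / (1 - inv_sq p)
  end.

Lemma lsum_r_pfactor p e j : prime p -> (0 < e + j)%N ->
  lsum (fun k => r (p ^ k)) (List.seq e j) =
  local_sum p e - rfac p * inv_sq p ^ (e + j) / (1 - inv_sq p).
Proof.
move=> pp; have [q0 q1] := inv_sq_bounds pp.
elim: j => [|j IH] H.
  rewrite addn0 /lsum /=; case: e H => [//|e] _ /=; field; lra.
rewrite seq_S lsum_app; case: (posnP (e + j)) => Hej.
  have [-> ->] : e = 0%N /\ j = 0%N by lia.
  by rewrite /lsum /= expn0 r1 /local_sum; field; lra.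
rewrite IH // /lsum /=.
have -> : r (p ^ (e + j)) = rfac p * inv_sq p ^ (e + j).
  by case: (e + j)%N Hej => [//|n] _; rewrite r_pfactor.
rewrite (_ : (e + j.+1)%N = (e + j).+1) /=; [field; lra | lia].
Qed.

Definition artin_factor (p : nat) : R := 1 - / (INR p * (INR p - 1)).

Definition inv_nphi (m : nat) : R := / (INR m * INR (totient m)).

Lemma inv_nphi1 : inv_nphi 1 = 1.
Proof. by rewrite /inv_nphi /= Rmult_1_r Rinv_1. Qed.

Lemma inv_nphiM m n : coprime m n -> inv_nphi (m * n) = inv_nphi m * inv_nphi n.
Proof. by move=> mn; rewrite /inv_nphi totient_coprime // !mult_INR !Rinv_mult; ring. Qed.

Lemma artin_factor_local_sum p e : prime p ->
  artin_factor p * local_sum p e = inv_nphi (p ^ e).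
Proof.
move=> pp; have H2 := prime_INR_ge2 pp.
rewrite /artin_factor /local_sum /rfac /inv_sq; case: e => [|e].
  by rewrite expn0 inv_nphi1; field; nra.
rewrite /inv_nphi totient_pfactor // mult_INR !INR_expn /=.
have -> : INR p.-1 = INR p - 1.
  by case: p pp {H2} => [//|p] _; rewrite S_INR /=; lra.
have Hpe : 0 < INR p ^ e by apply: pow_lt; lra.
rewrite !Rmult_1_r pow_inv Rpow_mult_distr; field; repeat split; nra.
Qed.

Lemma lprod_inv_nphi ps m : allprime ps -> NoDup ps -> (0 < m)%N ->
  (forall q, prime q -> q %| m -> In q ps) ->
  lprod (fun q => inv_nphi (q ^ logn q m)) ps = inv_nphi m.
Proof.
elim: ps m => [|p ps IH] m Hpr Hnd m0 Hq.
  by rewrite (no_prime_divisor_eq1 m0 Hq) inv_nphi1.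
inversion Hnd as [|? ? Hp Hnd']; subst.
have pp : prime p by apply: Hpr; left.
have [u [u0 pu Hm]] := pfactor_decomp pp m0.
change (lprod _ (p :: ps)) with
  (inv_nphi (p ^ logn p m) * lprod (fun q => inv_nphi (q ^ logn q m)) ps).
rewrite (lprod_ext _ (fun q => inv_nphi (q ^ logn q u))); last first.
  move=> q Hqin; have qp : q <> p by move=> E; subst q.
  by rewrite {1}Hm logn_pfactorM_other.
rewrite IH //; [|exact: allprime_tail Hpr|exact: prime_divisors_cofactor Hm pu Hq].
by rewrite {2}Hm inv_nphiM // coprimeXl // prime_coprime.
Qed.

Section Box.
Variables d K : nat.

Definition exps (p : nat) : list nat := List.seq (logn p d) (K.+1 - logn p d).

(* [box ps] enumerates the t whose prime factors lie in ps and whose q-adic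
   valuation lies between that of d and K for each q in ps (see [box_spec] and
   [in_box]). *)
Fixpoint box (ps : list nat) : list nat :=
  match ps with
  | nil => (1%N :: nil)
  | p :: ps' => flat_map (fun k => List.map (fun u => (p ^ k * u)%N) (box ps')) (exps p)
  end.

Lemma box_spec {ps} : allprime ps -> NoDup ps -> forall t, In t (box ps) ->
  [/\ (0 < t)%N, forall q, prime q -> q %| t -> In q ps
    & forall q, In q ps -> (logn q d <= logn q t <= K)%N].
Proof.
elim: ps => [|p ps IH] Hpr Hnd t /=.
  move=> [<-|//]; split=> // q pq /(dvdn_leq (isT : (0 < 1)%N)).
  by have := prime_gt1 pq; lia.
inversion Hnd as [|? ? Hp Hnd']; subst.
move/in_flat_map => [k [Hk /in_map_iff [u [<- Hu]]]].
have pp : prime p by apply: Hpr; left.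
have [u0 Hu_primes Hu_logn] := IH (allprime_tail Hpr) Hnd' u Hu.
have pu : ~~ (p %| u) by apply/negP => /(Hu_primes _ pp).
split; first by rewrite muln_gt0 expn_gt0 (prime_gt0 pp).
- move=> q pq; case: (eqVneq q p) => [->|/eqP qp]; first by left.
  by move/(prime_dvd_pfactorM pq pp qp)/(Hu_primes _ pq); right.
- move=> q [<-|Hq].
    by rewrite logn_pfactorM //; move: Hk; rewrite /exps => /in_seq; lia.
  have qp : q <> p by move=> E; subst q.
  by rewrite logn_pfactorM_other //; apply: Hu_logn.
Qed.

Lemma in_box ps : allprime ps -> NoDup ps -> forall t, (0 < t)%N ->
  (forall q, prime q -> q %| t -> In q ps) ->
  (forall q, In q ps -> (logn q d <= logn q t <= K)%N) -> In t (box ps).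
Proof.
elim: ps => [|p ps IH] Hpr Hnd t t0 Hq Hl.
  by rewrite (no_prime_divisor_eq1 t0 Hq); left.
inversion Hnd as [|? ? Hp Hnd']; subst.
have pp : prime p by apply: Hpr; left.
have [u [u0 pu Ht]] := pfactor_decomp pp t0.
apply/in_flat_map; exists (logn p t); split.
  by rewrite /exps; apply/in_seq; have := Hl p (or_introl erefl); lia.
apply/in_map_iff; exists u; split; first by rewrite -Ht.
apply: IH => //; [exact: allprime_tail Hpr|exact: prime_divisors_cofactor Ht pu Hq|].
move=> q Hqin; have qp : q <> p by move=> E; subst q.
by rewrite -(logn_pfactorM_other (logn p t) pp qp u0) -Ht; apply: Hl; right.
Qed.

Lemma box_NoDup ps : allprime ps -> NoDup ps -> NoDup (box ps).
Proof.
elim: ps => [|p ps IH] Hpr Hnd /=; first by constructor; [|constructor].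
inversion Hnd as [|? ? Hp Hnd']; subst.
have pp : prime p by apply: Hpr; left.
have Hspec := box_spec (allprime_tail Hpr) Hnd'.
have pu u : In u (box ps) -> ~~ (p %| u).
  by move=> /Hspec [_ Hu _]; apply/negP => /(Hu _ pp).
apply: NoDup_flat_map; first exact: seq_NoDup.
  move=> k _; apply: Injective_map_NoDup; last exact: IH (allprime_tail Hpr) Hnd'.
  move=> x y /eqP; rewrite eqn_pmul2l ?expn_gt0 ?(prime_gt0 pp) //; exact/eqP.
move=> k k' x _ _ /in_map_iff [u [<- Hu]] /in_map_iff [u' [Hx Hu']].
have [u0 _ _] := Hspec _ Hu; have [u0' _ _] := Hspec _ Hu'.
by rewrite -(logn_pfactorM k pp (pu _ Hu) u0) -Hx logn_pfactorM // pu.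
Qed.

Lemma lsum_box ps : allprime ps -> NoDup ps ->
  lsum r (box ps) = lprod (fun p => lsum (fun k => r (p ^ k)) (exps p)) ps.
Proof.
elim: ps => [|p ps IH] Hpr Hnd.
  by rewrite /= /lsum /lprod /= r1; lra.
inversion Hnd as [|? ? Hp Hnd']; subst.
have pp : prime p by apply: Hpr; left.
change (box (p :: ps)) with
  (flat_map (fun k => List.map (fun u => (p ^ k * u)%N) (box ps)) (exps p)).
rewrite lsum_flat_map (lsum_ext _ (fun k => lsum r (box ps) * r (p ^ k))).
  rewrite lsum_mull (IH (allprime_tail Hpr) Hnd') /lprod /=; lra.
move=> k _; rewrite lsum_map Rmult_comm -lsum_mull; apply: lsum_ext => u Hu.
have [u0 Hu_primes _] := box_spec (allprime_tail Hpr) Hnd' _ Hu.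
by rewrite r_mul //; apply/negP => /(Hu_primes _ pp).
Qed.

End Box.

Arguments box_spec {d K ps}.

Definition primes_below (n : nat) : list nat :=
  List.filter (fun p => prime p) (List.seq 0 n).

Lemma In_primes_below q n : In q (primes_below n) <-> prime q /\ (q < n)%N.
Proof.
rewrite /primes_below filter_In in_seq; split.
  by move=> [H1 H2]; split => //; apply/ltP; lia.
by move=> [H1 /ltP H2]; split => //; lia.
Qed.

Lemma allprime_primes_below n : allprime (primes_below n).
Proof. by move=> q /In_primes_below []. Qed.

Lemma NoDup_primes_below n : NoDup (primes_below n).
Proof. exact/NoDup_filter/seq_NoDup. Qed.

Lemma A_partialE n : A_partial n = lprod artin_factor (primes_below n).
Proof. by []. Qed.

Lemma A_partialS n :
  A_partial n.+1 = A_partial n * (if prime n then artin_factor n else 1).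
Proof.
rewrite !A_partialE /primes_below seq_S filter_app lprod_app /=.
by case: (prime n); rewrite /lprod /=; lra.
Qed.

(* Since 1 - 1/(m(m-1)) >= (1/4 + 1/(2m)) / (1/4 + 1/(2(m-1))) for m >= 3, the
   bound survives each factor of the product. *)
Lemma A_partial_lower n : 1/4 + / (2 * (INR n + 2)) <= A_partial (n + 3).
Proof.
elim: n => [|n IH]; first by rewrite /A_partial /=; lra.
rewrite (_ : (n.+1 + 3 = (n + 3).+1)%N) ?A_partialS ?S_INR; last lia.
have Hn : 0 <= INR n := pos_INR n.
case: (prime (n + 3)) => /=; last first.
  have : / (2 * (INR n + 1 + 2)) <= / (2 * (INR n + 2)) by apply: Rinv_le_contravar; lra.
  lra.
rewrite /artin_factor plus_INR /=.
set x := INR n in Hn IH *.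
set f := 1 - / ((x + (1 + 1 + 1)) * (x + (1 + 1 + 1) - 1)).
have f0 : 0 <= f.
  have : / ((x + (1 + 1 + 1)) * (x + (1 + 1 + 1) - 1)) <= 1.
    rewrite -Rinv_1; apply: Rinv_le_contravar; nra.
  rewrite /f; lra.
have Hgap : (1 / 4 + / (2 * (x + 2))) * f - (1 / 4 + / (2 * (x + 1 + 2)))
            = x / (4 * (x + 3) * (x + 2) ^ 2) by rewrite /f; field; lra.
have : 0 <= x / (4 * (x + 3) * (x + 2) ^ 2) by apply: Rle_mult_inv_pos; nra.
have := Rmult_le_compat_r f _ _ f0 IH.
lra.
Qed.

Lemma A_partial_ge n : 1/4 <= A_partial n.
Proof.
case: (ltnP n 3) => Hn.
  by move: Hn; case: n => [|[|[|]]] // _; rewrite /A_partial /=; lra.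
rewrite (_ : n = ((n - 3) + 3)%N); last lia.
have := A_partial_lower (n - 3).
have : 0 < / (2 * (INR (n - 3) + 2)).
  by apply: Rinv_0_lt_compat; have := pos_INR (n - 3); lra.
lra.
Qed.

Lemma A_partial_decr n : A_partial n.+1 <= A_partial n.
Proof.
rewrite A_partialS; have := A_partial_ge n; case E: (prime n) => /= H; last lra.
have H2 := prime_INR_ge2 E.
have : 0 < / (INR n * (INR n - 1)) by apply: Rinv_0_lt_compat; nra.
rewrite /artin_factor; nra.
Qed.

Lemma A_partial_le_shift n k : A_partial (k + n) <= A_partial n.
Proof.
elim: k => [|k IH]; first by rewrite add0n; lra.
rewrite addSn; have := A_partial_decr (k + n); lra.
Qed.

Lemma is_lim_seq_A_partial : is_lim_seq A_partial ArtinA.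
Proof.
have [l Hl] : ex_finite_lim_seq A_partial.
  apply: (ex_finite_lim_seq_decr _ (1/4)); [exact: A_partial_decr|exact: A_partial_ge].
by rewrite /ArtinA (is_lim_seq_unique _ _ Hl).
Qed.

Lemma ArtinA_le n : ArtinA <= A_partial n.
Proof.
have H := proj1 (is_lim_seq_incr_n A_partial n ArtinA) is_lim_seq_A_partial.
exact: is_lim_seq_le _ _ _ _ (A_partial_le_shift n) H (is_lim_seq_const (A_partial n)).
Qed.

Lemma ArtinA_ge : 1/4 <= ArtinA.
Proof.
exact: is_lim_seq_le _ _ _ _ A_partial_ge (is_lim_seq_const (1/4)) is_lim_seq_A_partial.
Qed.

Lemma sum_f_R0_mono (a : nat -> R) N k : (forall n, 0 <= a n) ->
  sum_f_R0 a N <= sum_f_R0 a (k + N).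
Proof.
move=> Ha; elim: k => [|k IH]; first by rewrite add0n; lra.
rewrite addSn /=; have := Ha (k + N).+1; lra.
Qed.

Lemma sum_f_R0_lsum (a : nat -> R) N : sum_f_R0 a N = lsum a (List.seq 0 N.+1).
Proof.
elim: N => [|N IH]; first by rewrite /lsum /=; lra.
rewrite seq_S lsum_app -IH /lsum /=; lra.
Qed.

Lemma sum_f_R0_le_Series (a : nat -> R) N : (forall n, 0 <= a n) -> ex_series a ->
  sum_f_R0 a N <= Series a.
Proof.
move=> Ha [l Hl]; rewrite (is_series_unique _ _ Hl).
have H : is_lim_seq (fun k => sum_n a (k + N)) l.
  exact: (proj1 (is_lim_seq_incr_n (sum_n a) N l) Hl).
apply: (is_lim_seq_le _ _ _ _ _ (is_lim_seq_const _) H) => k.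
by rewrite sum_n_Reals; apply: sum_f_R0_mono.
Qed.

Lemma congr0 t d : (0 < d)%N -> congr t 0 d = (d %| t).
Proof.
move=> /ltP d0; rewrite /congr Z.sub_0_r.
apply/Bool.eq_true_iff_eq; rewrite Z.eqb_eq Z.mod_divide; last lia.
split.
  move=> [z Hz]; apply/dvdnP; exists (Z.to_nat z); apply: Nat2Z.inj.
  rewrite -multE Nat2Z.inj_mul Z2Nat.id //; nia.
by move=> /dvdnP [k ->]; exists (Z.of_nat k); rewrite -multE Nat2Z.inj_mul.
Qed.

Lemma congr_half t d : (0 < d)%N ->
  congr t (Z.of_nat d) (2 * d) = congr t 0 d && ~~ congr t 0 (2 * d).
Proof.
move=> /ltP d0; rewrite /congr Z.sub_0_r -multE Nat2Z.inj_mul.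
set T := Z.of_nat t; set D := Z.of_nat d.
apply/Bool.eq_true_iff_eq; rewrite Bool.andb_true_iff Bool.negb_true_iff !Z.eqb_eq Z.eqb_neq.
rewrite !Z.mod_divide; try lia; split.
- move=> [z Hz]; split; first by exists (2 * z + 1)%Z; lia.
  move=> [w Hw]; have : (D * (2 * w - 2 * z - 1) = 0)%Z by lia.
  by move/Z.mul_eq_0 => [|]; lia.
- move=> [[a Ha] Hn]; case: (Z.Even_or_Odd a) => [[b Hb]|[b Hb]].
    by exfalso; apply: Hn; exists b; subst a; lia.
  by exists b; subst a; lia.
Qed.

Section Multiples.
Variable d : nat.
Hypothesis d0 : (0 < d)%N.

Definition local_prod (n : nat) : R :=
  lprod (fun p => local_sum p (logn p d)) (primes_below n).

Lemma rho_term0E t : rho_term 0 d t = if (0 < t)%N && (d %| t) then r t else 0.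
Proof. by rewrite /rho_term congr0 //; case: t. Qed.

Lemma rho_term0_nonneg t : 0 <= rho_term 0 d t.
Proof.
rewrite rho_term0E; case E: ((0 < t)%N && (d %| t)); last lra.
by apply: r_nonneg; case/andP: E.
Qed.

Lemma prime_divisors_below {n} : (d < n)%N ->
  forall q, prime q -> q %| d -> In q (primes_below n).
Proof.
move=> Hn q pq qd; apply/In_primes_below; split => //.
by have := dvdn_leq d0 qd; lia.
Qed.

Lemma rho_term0_box n K t : (d < n)%N -> In t (box d K (primes_below n)) ->
  rho_term 0 d t = r t.
Proof.
move=> Hn Ht; rewrite rho_term0E.
have [t0 _ Hlog] := box_spec (allprime_primes_below n) (NoDup_primes_below n) _ Ht.
suff -> : d %| t by rewrite t0.
apply: dvdn_from_logn => // q pq; case: (boolP (q %| d)) => qd.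
  by have /andP[] := Hlog q (prime_divisors_below Hn _ pq qd).
by rewrite logn_coprime ?prime_coprime.
Qed.

Lemma lsum_exps p K : prime p ->
  lsum (fun k => r (p ^ k)) (exps d K p) =
  local_sum p (logn p d) - rfac p * inv_sq p ^ (maxn (logn p d) K.+1) / (1 - inv_sq p).
Proof.
move=> pp; rewrite /exps lsum_r_pfactor //; last lia.
by rewrite (_ : (logn p d + (K.+1 - logn p d))%N = maxn (logn p d) K.+1) //; lia.
Qed.

Lemma lsum_exps_bounds {p} K : prime p ->
  0 <= lsum (fun k => r (p ^ k)) (exps d K p) <= local_sum p (logn p d).
Proof.
move=> pp; split.
  by apply: lsum_nonneg => k; apply/r_nonneg; rewrite expn_gt0 (prime_gt0 pp).
have [q0 q1] := inv_sq_bounds pp.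
have : 0 <= rfac p * inv_sq p ^ (maxn (logn p d) K.+1) / (1 - inv_sq p).
  apply: Rle_mult_inv_pos; last lra.
  by apply: Rmult_le_pos; [exact: rfac_nonneg|apply: pow_le; lra].
rewrite lsum_exps //; lra.
Qed.

Lemma is_lim_seq_lsum_exps p : prime p ->
  is_lim_seq (fun K => lsum (fun k => r (p ^ k)) (exps d K p)) (local_sum p (logn p d)).
Proof.
move=> pp; set e := logn p d; have [q0 q1] := inv_sq_bounds pp.
set c := rfac p * inv_sq p ^ e.+1 / (1 - inv_sq p).
apply/(is_lim_seq_incr_n _ e).
apply: (is_lim_seq_ext (fun K => local_sum p e - c * inv_sq p ^ K)).
  move=> K; rewrite lsum_exps // -/e (_ : maxn e (K + e).+1 = (K + e.+1)%N); last lia.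
  by rewrite /c -plusE pow_add; field; lra.
have Hgeom : is_lim_seq (fun K => c * inv_sq p ^ K) 0.
  have Hq : Rabs (inv_sq p) < 1 by rewrite Rabs_pos_eq; lra.
  have := is_lim_seq_scal_l _ c _ (is_lim_seq_geom (inv_sq p) Hq).
  by rewrite /= Rmult_0_r.
have := is_lim_seq_minus' _ _ _ _ (is_lim_seq_const (local_sum p e)) Hgeom.
by rewrite Rminus_0_r.
Qed.

Lemma A_partial_local_prod n : (d < n)%N -> A_partial n * local_prod n = inv_nphi d.
Proof.
move=> Hn; rewrite A_partialE /local_prod -lprod_mul.
rewrite (lprod_ext _ (fun q => inv_nphi (q ^ logn q d))).
  exact: lprod_inv_nphi (allprime_primes_below n) (NoDup_primes_below n) d0
    (prime_divisors_below Hn).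
by move=> q /In_primes_below [pq _]; apply: artin_factor_local_sum.
Qed.

Lemma local_prod_nonneg n : 0 <= local_prod n.
Proof.
apply: lprod_nonneg => q /In_primes_below [pq _].
by have := lsum_exps_bounds 0 pq; lra.
Qed.

Lemma partial_sum_le_local_prod N : (d <= N)%N ->
  sum_f_R0 (rho_term 0 d) N <= local_prod N.+1.
Proof.
move=> HN; rewrite sum_f_R0_lsum.
have Hbox := @in_box d N _ (allprime_primes_below N.+1) (NoDup_primes_below N.+1).
apply: (Rle_trans _ (lsum (rho_term 0 d) (box d N (primes_below N.+1)))).
  apply: lsum_le_support; [exact: rho_term0_nonneg|exact: seq_NoDup|].
  move=> t /in_seq Ht; rewrite rho_term0E.
  case E: ((0 < t)%N && (d %| t)) => // _; move: E => /andP[t0 dt].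
  apply: Hbox => // [q pq qt|q /In_primes_below [pq _]].
    by apply/In_primes_below; split => //; have := dvdn_leq t0 qt; lia.
  apply/andP; split; first exact: dvdn_leq_log t0 dt.
  have : (logn q t < q ^ logn q t)%N by apply/ltn_expl/prime_gt1.
  by have := dvdn_leq t0 (pfactor_dvdnn q t); lia.
rewrite (lsum_ext _ r); last by move=> t Ht; apply: rho_term0_box Ht; lia.
rewrite lsum_box; [|exact: allprime_primes_below|exact: NoDup_primes_below].
by apply: lprod_le => p /In_primes_below [pp _]; apply: lsum_exps_bounds.
Qed.

Lemma ex_series_rho_term0 : ex_series (rho_term 0 d).
Proof.
have Hbound N : sum_f_R0 (rho_term 0 d) N <= 4 * inv_nphi d.
  apply: (Rle_trans _ _ _ (sum_f_R0_mono _ N d rho_term0_nonneg)).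
  apply: (Rle_trans _ _ _ (partial_sum_le_local_prod _ (leq_addr N d))).
  have E : A_partial (d + N).+1 * local_prod (d + N).+1 = inv_nphi d.
    by apply: A_partial_local_prod; rewrite ltnS leq_addr.
  have := A_partial_ge (d + N).+1; have := local_prod_nonneg (d + N).+1; nra.
have [l Hl] : ex_finite_lim_seq (sum_n (rho_term 0 d)).
  apply: (ex_finite_lim_seq_incr _ (4 * inv_nphi d)) => n; rewrite !sum_n_Reals //=.
  by have := rho_term0_nonneg n.+1; lra.
by exists l.
Qed.

Lemma local_prod_le_Series n : (d < n)%N -> local_prod n <= Series (rho_term 0 d).
Proof.
move=> Hn; have Hpr := allprime_primes_below n; have Hnd := NoDup_primes_below n.
have Hlim : is_lim_seq
    (fun K => lprod (fun p => lsum (fun k => r (p ^ k)) (exps d K p)) (primes_below n))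
    (local_prod n).
  by apply: is_lim_seq_lprod => p /In_primes_below [pp _]; apply: is_lim_seq_lsum_exps.
apply: (is_lim_seq_le _ _ _ _ _ Hlim (is_lim_seq_const _)) => K.
rewrite -lsum_box // -(lsum_ext (rho_term 0 d)); last by move=> t; apply: rho_term0_box.
have [M HM] : exists M, forall t, In t (box d K (primes_below n)) -> (t <= M)%N.
  elim: (box _ _ _) => [|a l [M HM]]; first by exists 0%N.
  exists (maxn a M) => t [<-|Ht]; first exact: leq_maxl.
  exact: leq_trans (HM t Ht) (leq_maxr _ _).
apply: (Rle_trans _ (sum_f_R0 (rho_term 0 d) M)).
  rewrite sum_f_R0_lsum; apply: lsum_le_support; [exact: rho_term0_nonneg| |].
    exact: box_NoDup.
  by move=> t Ht _; apply/in_seq; have := HM t Ht; lia.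
exact: sum_f_R0_le_Series rho_term0_nonneg ex_series_rho_term0.
Qed.

Lemma inv_nphi_le_ArtinA_Series : inv_nphi d <= ArtinA * Series (rho_term 0 d).
Proof.
have Hlim : is_lim_seq (fun k => A_partial (k + d.+1) * Series (rho_term 0 d))
                       (ArtinA * Series (rho_term 0 d)).
  apply: is_lim_seq_mult'; last exact: is_lim_seq_const.
  exact: (proj1 (is_lim_seq_incr_n A_partial d.+1 ArtinA) is_lim_seq_A_partial).
apply: (is_lim_seq_le _ _ _ _ _ (is_lim_seq_const _) Hlim) => k.
rewrite -(A_partial_local_prod (k + d.+1)); last lia.
apply: Rmult_le_compat_l; first by have := A_partial_ge (k + d.+1); lra.
by apply: local_prod_le_Series; lia.
Qed.

Lemma ArtinA_Series_le_inv_nphi : ArtinA * Series (rho_term 0 d) <= inv_nphi d.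
Proof.
have Hlim : is_lim_seq (fun k => ArtinA * sum_n (rho_term 0 d) (k + d))
                       (ArtinA * Series (rho_term 0 d)).
  apply: is_lim_seq_mult'; first exact: is_lim_seq_const.
  apply: (proj1 (is_lim_seq_incr_n _ d _)).
  exact: Series_correct ex_series_rho_term0.
apply: (is_lim_seq_le _ _ _ _ _ Hlim (is_lim_seq_const _)) => k.
rewrite sum_n_Reals -(A_partial_local_prod (k + d).+1); last lia.
have HS := partial_sum_le_local_prod _ (leq_addl k d).
have HA := ArtinA_le (k + d).+1; have HA0 := ArtinA_ge.
have := local_prod_nonneg (k + d).+1; nra.
Qed.

Lemma ArtinA_Series_rho_term0 : ArtinA * Series (rho_term 0 d) = inv_nphi d.
Proof. apply: Rle_antisym; [exact: ArtinA_Series_le_inv_nphi|exact: inv_nphi_le_ArtinA_Series]. Qed.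

End Multiples.

Lemma rho0E d : (0 < d)%N -> rho 0 d = inv_nphi d.
Proof. exact: ArtinA_Series_rho_term0. Qed.

Lemma rho_term_half d t : (0 < d)%N ->
  rho_term (Z.of_nat d) (2 * d) t = rho_term 0 d t - rho_term 0 (2 * d) t.
Proof.
move=> d0; have d20 : (0 < 2 * d)%N by rewrite muln_gt0.
have H2d : 2 * d %| t -> d %| t := dvdn_trans (dvdn_mull 2 (dvdnn d)).
rewrite /rho_term congr_half // !congr0 //.
case: (Nat.leb 1 t) => /=; last lra.
case E: (2 * d %| t); first by rewrite (H2d E) /=; lra.
by case: (d %| t) => /=; lra.
Qed.

Lemma inv_nphi_double m : (0 < m)%N ->
  inv_nphi m - inv_nphi (2 * m) = (if odd m then 1 else 3) * inv_nphi (2 * m).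
Proof.
move=> m0; have [u [u0 u_odd Hm]] := pfactor_decomp (isT : prime 2) m0.
have Hc j : coprime (2 ^ j) u by rewrite coprimeXl // prime_coprime.
rewrite dvdn2 negbK in u_odd.
move: Hm; move: (logn 2 m) => e ->.
rewrite mulnA -expnS !inv_nphiM // oddM oddX u_odd andbT.
set X := inv_nphi u; case: e => [|e].
  by rewrite expn0 inv_nphi1 /inv_nphi totient_pfactor //=; field.
rewrite /inv_nphi !totient_pfactor //= !mul1n !INR_expn /=.
by field; apply: pow_nonzero; lra.
Qed.

Lemma rho_half d : (0 < d)%N ->
  rho (Z.of_nat d) (2 * d) = if odd d then rho 0 (2 * d) else 3 * rho 0 (2 * d).
Proof.
move=> d0; have d20 : (0 < 2 * d)%N by rewrite muln_gt0.
rewrite /rho (Series_ext _ _ (fun t => rho_term_half d t d0)).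
rewrite (Series_minus _ _ (ex_series_rho_term0 _ d0) (ex_series_rho_term0 _ d20)).
rewrite Rmult_minus_distr_l !ArtinA_Series_rho_term0 // inv_nphi_double //.
by case: (odd d); ring.
Qed.

Lemma Nat_oddE n : Nat.odd n = odd n.
Proof. by elim: n => [|n IH] //; rewrite Nat.odd_succ -Nat.negb_odd IH. Qed.

End ArtinDensity.

Import ArtinDensity.
Open Scope R_scope.

Theorem mainTheorem9 : forall d : nat, (1 <= d)%nat ->
  rho 0%Z d = / (INR d * INR (phi d)) /\
  rho (Z.of_nat d) (2 * d) =
    (if Nat.odd d then rho 0%Z (2 * d) else 3 * rho 0%Z (2 * d)).
Proof.
intros d Hd.
pose proof (ssrbool.introT ssrnat.leP Hd) as d0.
split.
- exact (rho0E d d0).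
- rewrite Nat_oddE; exact (rho_half d d0).
Qed.
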